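(* Let $\mathcal{A}\subset\mathbb{Z}^2$ be finite with $\Delta_{\mathcal{A}}$ a polygon, and let $f\colon\mathcal{A}\to\mathbb{R}^2$ be compatible. Then for every $w\in\mathbb{R}^{\mathcal{A}}_{>}$ and every edge $\delta$ of $\Delta_{\mathcal{A}}$, the restriction of the toric Bézier patch $F_w$ to $\delta$ is injective.
   Context: Let $\mathcal{A}\subset\mathbb{Z}^2$ be finite and write $\Delta_{\mathcal{A}}$ for its convex hull, a lattice polygon. Write it via its edge inequalities as $\Delta_{\mathcal{A}}=\{x\in\mathbb{R}^2 : h_i(x)\ge 0,\ i=1,\dots,\ell\}$. Here there is one $h_i$ for each edge, and $h_i(x,y)=a_ix+b_iy+c_i$ with integers $a_i,b_i,c_i$ and $\gcd(a_i,b_i)=1$. For $\mathbf{a}\in\mathcal{A}$ the toric Bernstein polynomial is $\beta_{\mathbf{a}}(x)=\prod_{i=1}^{\ell} h_i(x)^{h_i(\mathbf{a})}$. Given control points $f\colon\mathcal{A}\to\mathbb{R}^d$ and weights $w=(w_{\mathbf{a}})\in\mathbb{R}^{\mathcal{A}}_{>}$ (all $w_{\mathbf{a}}>0$), the toric Bézier patch is $$F_w(x)=\frac{\sum_{\mathbf{a}\in\mathcal{A}} w_{\mathbf{a}} f(\mathbf{a})\beta_{\mathbf{a}}(x)}{\sum_{\mathbf{a}\in\mathcal{A}} w_{\mathbf{a}}\beta_{\mathbf{a}}(x)},\qquad x\in\Delta_{\mathcal{A}}.$$ An affinely independent triple $p_0,p_1,p_2\in\mathbb{R}^2$ has orientation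 given by the sign of $\det(p_1-p_0,\,p_2-p_0)$. An assignment $f\colon\mathcal{A}\to\mathbb{R}^2$ is weakly compatible if both of the following hold: <ol> <li>There exist affinely independent $\mathbf{a}_0,\mathbf{a}_1,\mathbf{a}_2\in\mathcal{A}$ such that $f(\mathbf{a}_0),f(\mathbf{a}_1),f(\mathbf{a}_2)$ are affinely independent.</li> <li>For any affinely independent $\mathbf{a}'_0,\mathbf{a}'_1,\mathbf{a}'_2\in\mathcal{A}$ with the same orientation as $\mathbf{a}_0,\mathbf{a}_1,\mathbf{a}_2$: if $f(\mathbf{a}'_0),f(\mathbf{a}'_1),f(\mathbf{a}'_2)$ are affinely independent, then they have the same orientation as $f(\mathbf{a}_0),f(\mathbf{a}_1),f(\mathbf{a}_2)$.</li> </ol> The assignment $f$ is compatible if it is weakly compatible and no two distinct vertices of $\Delta_{\mathcal{A}}$ have the same image under $f$. *)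

From HB Require Import structures.
From mathcomp Require Import all_boot all_order all_algebra.
Set Implicit Arguments. Unset Strict Implicit. Unset Printing Implicit Defensive.
Import Order.TTheory GRing.Theory Num.Theory.
Local Open Scope ring_scope.

Definition lattice := (int * int)%type.
(* An affine integer form h(x,y) = a x + b y + c, stored as ((a, b), c). *)
Definition affform := (int * int * int)%type.

Definition hZ (h : affform) (p : lattice) : int :=
  h.1.1 * p.1 + h.1.2 * p.2 + h.2.

Definition hR {R : pzRingType} (h : affform) (x : R * R) : R :=
  h.1.1%:~R * x.1 + h.1.2%:~R * x.2 + h.2%:~R.

Definition toR {R : pzRingType} (p : lattice) : R * R := (p.1%:~R, p.2%:~R).

Definition det3 {R : pzRingType} (p0 p1 p2 : R * R) : R :=
  (p1.1 - p0.1) * (p2.2 - p0.2) - (p1.2 - p0.2) * (p2.1 - p0.1).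

(* Delta_A is a polygon: A contains three affinely independent points. *)
Definition is_polygon (A : seq lattice) : Prop :=
  exists a0 a1 a2, [/\ a0 \in A, a1 \in A, a2 \in A & det3 a0 a1 a2 != 0].

(* h is an edge inequality of Delta_A: primitive normal, h >= 0 on A,
   and h vanishes at two distinct points of A (so {h = 0} cuts out an edge). *)
Definition is_edge_ineq (A : seq lattice) (h : affform) : Prop :=
  [/\ gcdz h.1.1 h.1.2 = 1,
      (forall p, p \in A -> 0 <= hZ h p) &
      exists p q, [/\ p \in A, q \in A, p != q, hZ h p = 0 & hZ h q = 0]].

Definition in_hull {R : realFieldType} (A : seq lattice) (x : R * R) : Prop :=
  exists lam : lattice -> R,
    [/\ (forall a, a \in A -> 0 <= lam a),
        \sum_(a <- A) lam a = 1,
        \sum_(a <- A) lam a * (toR a : R * R).1 = x.1 &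
        \sum_(a <- A) lam a * (toR a : R * R).2 = x.2].

Definition in_edge {R : realFieldType} (A : seq lattice) (h : affform) (x : R * R) : Prop :=
  in_hull A x /\ hR h x = 0.

(* Toric Bernstein polynomial beta_a(x) = prod_i h_i(x)^{h_i(a)}
   (h_i(a) >= 0 for a in A, so the exponent is the natural number |h_i(a)|). *)
Definition bernstein {R : pzRingType} (H : seq affform) (a : lattice) (x : R * R) : R :=
  \prod_(h <- H) hR h x ^+ `|hZ h a|%N.

Definition patch {R : realFieldType} (A : seq lattice) (H : seq affform)
  (f : lattice -> R * R) (w : lattice -> R) (x : R * R) : R * R :=
  let den := \sum_(a <- A) w a * bernstein H a x in
  ((\sum_(a <- A) w a * (f a).1 * bernstein H a x) / den,
   (\sum_(a <- A) w a * (f a).2 * bernstein H a x) / den).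

Definition weakly_compatible {R : realFieldType} (A : seq lattice)
  (f : lattice -> R * R) : Prop :=
  exists a0 a1 a2,
    [/\ [/\ a0 \in A, a1 \in A & a2 \in A],
        det3 a0 a1 a2 != 0,
        det3 (f a0) (f a1) (f a2) != 0 &
        forall b0 b1 b2, b0 \in A -> b1 \in A -> b2 \in A ->
          det3 b0 b1 b2 != 0 ->
          sgz (det3 b0 b1 b2) = sgz (det3 a0 a1 a2) ->
          det3 (f b0) (f b1) (f b2) != 0 ->
          sgz (det3 (f b0) (f b1) (f b2)) = sgz (det3 (f a0) (f a1) (f a2))].

Definition is_vertex {R : realFieldType} (A : seq lattice) (v : lattice) : Prop :=
  v \in A /\ exists c : R * R, forall p, p \in A -> p != v ->
    c.1 * (toR v : R * R).1 + c.2 * (toR v : R * R).2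
      < c.1 * (toR p : R * R).1 + c.2 * (toR p : R * R).2.

Definition compatible {R : realFieldType} (A : seq lattice) (f : lattice -> R * R) : Prop :=
  weakly_compatible A f /\
  (forall v1 v2, is_vertex (R := R) A v1 -> is_vertex (R := R) A v2 ->
     v1 != v2 -> f v1 != f v2).

From HB Require Import structures.
From mathcomp Require Import all_boot all_order all_algebra.
From mathcomp Require Import ring lra.
Import Order.TTheory GRing.Theory Num.Theory.
Set Implicit Arguments. Unset Strict Implicit. Unset Printing Implicit Defensive.
Local Open Scope ring_scope.

(* Fix an edge {h = 0} of the hull, with endpoints v0, v1 ordered by the
   tangent coordinate tau.  On the edge only the control points lying on it
   have nonzero weight, and their Bernstein polynomials are totally positive
   in tau: by a two-factor rearrangement inequality, applied to each edge form,
   the 2x2 minors of the weights at two edge points x, y have the sign of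
   (tau a' - tau a) (tau y - tau x).  Weak compatibility fixes the sign of
   det3 (f a) (f a') (f b) for a before a' on the edge and b off it.  If
   F x = F y with tau x < tau y, these minors weighted by these determinants
   form a vanishing sum of terms of one sign, so every term vanishes and f(A)
   would be collinear.  The endpoint cases use that v0 and v1 are vertices,
   cut out by h and the adjacent edges, so that f v0 != f v1. *)

(* For an affine form h = a x + b y + c: its tangent coordinate -b x + a y,
   which parametrizes the lines h = const; |(a,b)|^2; and the rate of change
   of the linear part of g along the direction (-b, a). *)
Definition tangent (h : affform) : affform := ((- h.1.2, h.1.1), 0).
Definition normsq (h : affform) : int := h.1.1 * h.1.1 + h.1.2 * h.1.2.
Definition slope (g h : affform) : int := g.1.1 * (- h.1.2) + g.1.2 * h.1.1.

Lemma hR_toR (R : pzRingType) (g : affform) (p : lattice) :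
  hR g (toR p : R * R) = (hZ g p)%:~R.
Proof. by rewrite /hR /hZ /toR /= !rmorphD !rmorphM. Qed.

Lemma toR_int (p : lattice) : toR p = p.
Proof. by case: p => p1 p2; rewrite /toR !intz. Qed.

Lemma level_slope (R : comPzRingType) (g h : affform) (p q : R * R) :
  hR h p = hR h q ->
  (normsq h)%:~R * (hR g q - hR g p) =
  (hR (tangent h) q - hR (tangent h) p) * (slope g h)%:~R.
Proof.
move=> Epq; apply/eqP; rewrite -subr_eq0; apply/eqP.
transitivity ((hR h q - hR h p) * (h.1.1%:~R * g.1.1%:~R + h.1.2%:~R * g.1.2%:~R)).
  by rewrite /hR /normsq /slope /tangent /=; ring.
by rewrite Epq subrr mul0r.
Qed.

Lemma level_slopeZ (g h : affform) (p q : lattice) :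
  hZ h p = hZ h q ->
  normsq h * (hZ g q - hZ g p) = (hZ (tangent h) q - hZ (tangent h) p) * slope g h.
Proof.
move=> Epq; have := @level_slope int g h (toR p) (toR q).
by rewrite !hR_toR !intz; apply.
Qed.

Lemma normsq_gt0 (h : affform) : gcdz h.1.1 h.1.2 = 1 -> 0 < normsq h.
Proof.
move=> hprim; rewrite /normsq -!expr2.
have [e1|n1] := eqVneq h.1.1 0.
  rewrite e1 expr0n add0r exprn_even_gt0 //.
  by apply/eqP => e2; move: hprim; rewrite e1 e2 /gcdz.
by rewrite ltr_wpDr ?sqr_ge0 ?exprn_even_gt0.
Qed.

Lemma level_point_unique (R : numDomainType) (h : affform) (p q : R * R) :
  0 < normsq h -> hR h p = hR h q -> hR (tangent h) p = hR (tangent h) q -> p = q.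
Proof.
move=> N Eh Et.
have N' : (normsq h)%:~R != 0 :> R by rewrite intr_eq0 gt_eqF.
have coord g : hR g q = hR g p.
  apply/eqP; rewrite -subr_eq0 -(mulrI_eq0 _ (mulfI N')) level_slope // Et.
  by rewrite subrr mul0r.
move: (coord ((1, 0), 0)) (coord ((0, 1), 0)); rewrite /hR /= !rmorph0 !rmorph1.
by case: p q {Eh Et coord} => [p1 p2] [q1 q2] /=; rewrite !(mul1r, mul0r, addr0, add0r) => -> ->.
Qed.

Lemma level_point_uniqueZ (h : affform) (p q : lattice) :
  0 < normsq h -> hZ h p = hZ h q -> hZ (tangent h) p = hZ (tangent h) q -> p = q.
Proof.
move=> N Eh Et; rewrite -[p]toR_int -[q]toR_int.
by apply: (level_point_unique N); rewrite !hR_toR !intz.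
Qed.

Lemma orient_det (h : affform) (a a' b : lattice) :
  hZ h a = 0 -> hZ h a' = 0 ->
  normsq h * det3 a a' b = - ((hZ (tangent h) a' - hZ (tangent h) a) * hZ h b).
Proof.
move=> ha ha'.
have E : normsq h * det3 a a' b + (hZ (tangent h) a' - hZ (tangent h) a) * hZ h b =
  (hZ (tangent h) a' - hZ (tangent h) a) * hZ h a +
  (hZ h a' - hZ h a) * (h.1.1 * (b.2 - a.2) - h.1.2 * (b.1 - a.1)).
  by rewrite /normsq /det3 /hZ /tangent /=; ring.
by apply/eqP; rewrite -addr_eq0 E ha ha' subrr !mul0r mulr0 addr0.
Qed.

Lemma det3_cyc (R : comPzRingType) (p q r : R * R) : det3 p q r = det3 q r p.
Proof. rewrite /det3; ring. Qed.
Lemma det3_swap (R : comPzRingType) (p q r : R * R) : det3 q p r = - det3 p q r.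
Proof. rewrite /det3; ring. Qed.
Lemma det3_pp (R : comPzRingType) (p q : R * R) : det3 p p q = 0.
Proof. rewrite /det3; ring. Qed.
Lemma det3_pqp (R : comPzRingType) (p q : R * R) : det3 p q p = 0.
Proof. by rewrite -det3_cyc det3_pp. Qed.
Lemma det3_four (R : comPzRingType) (P Q S B : R * R) :
  det3 P Q S = det3 P Q B - det3 P S B + det3 Q S B.
Proof. rewrite /det3; ring. Qed.

Lemma det3_collinear (R : numFieldType) (P Q X0 X1 X2 : R * R) :
  P != Q -> det3 P Q X0 = 0 -> det3 P Q X1 = 0 -> det3 P Q X2 = 0 ->
  det3 X0 X1 X2 = 0.
Proof.
move=> nPQ D0 D1 D2.
have E1 : (Q.1 - P.1) * det3 X0 X1 X2 =
  (X1.1 - X0.1) * (det3 P Q X2 - det3 P Q X0) - (X2.1 - X0.1) * (det3 P Q X1 - det3 P Q X0).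
  by rewrite /det3; ring.
have E2 : (Q.2 - P.2) * det3 X0 X1 X2 =
  (X1.2 - X0.2) * (det3 P Q X2 - det3 P Q X0) - (X2.2 - X0.2) * (det3 P Q X1 - det3 P Q X0).
  by rewrite /det3; ring.
rewrite D0 D1 D2 !subrr !mulr0 subrr in E1 E2.
have [e1|n1] := eqVneq (Q.1 - P.1) 0; last first.
  by move/eqP: E1; rewrite mulf_eq0 (negPf n1) => /eqP.
have [e2|n2] := eqVneq (Q.2 - P.2) 0; last first.
  by move/eqP: E2; rewrite mulf_eq0 (negPf n2) => /eqP.
case/negP: nPQ; move/eqP: e1; move/eqP: e2; rewrite !subr_eq0.
by case: P Q {E1 E2 D0 D1 D2} => [p1 p2] [q1 q2] /= /eqP -> /eqP ->.
Qed.

Lemma exists_min (R : realDomainType) (T : eqType) (s : seq T) (F : T -> R) (x : T) :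
  x \in s -> exists2 y, y \in s & forall z, z \in s -> F y <= F z.
Proof.
elim: s x => [//|a s IH] x _.
have [[y ys Hy]|->] : (exists2 y, y \in s & forall z, z \in s -> F y <= F z) \/ s = [::].
  by case: s IH => [|b s] IH; [right | left; apply: (IH b); rewrite mem_head].
  have [le|lt] := lerP (F a) (F y).
    exists a => [|z]; rewrite ?mem_head // inE => /orP [/eqP ->//|/Hy]; exact: le_trans.
  exists y => [|z]; first by rewrite inE ys orbT.
  by rewrite inE => /orP [/eqP ->|/Hy//]; exact: ltW.
by exists a => [|z]; rewrite ?mem_head // inE => /eqP ->.
Qed.

Lemma expr_split (R : comPzRingType) (p q : R) (m k : nat) :
  p ^+ (k + m) * q ^+ m = (p ^+ m * q ^+ m) * p ^+ k /\
  p ^+ m * q ^+ (k + m) = (p ^+ m * q ^+ m) * q ^+ k.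
Proof. by rewrite !exprD; split; ring. Qed.

Lemma rearrange_le (R : realDomainType) (p q : R) (m n : nat) :
  0 <= p -> 0 <= q -> 0 <= (n%:R - m%:R) * (q - p) ->
  p ^+ n * q ^+ m <= p ^+ m * q ^+ n.
Proof.
move=> p0 q0 H.
wlog lemn : p q m n p0 q0 H / (m <= n)%N.
  move=> W; have [|/ltnW lenm] := leqP m n; first exact: W.
  rewrite [p ^+ n * _]mulrC [p ^+ m * _]mulrC W //.
  by rewrite -mulrNN !opprB.
have [lepq|ltqp] := lerP p q.
  have [E1 E2] := expr_split p q m (n - m); rewrite subnK // in E1 E2.
  rewrite E1 E2 ler_wpM2l ?mulr_ge0 ?exprn_ge0 //.
  by rewrite lerXn2r ?nnegrE.
have : (n%:R - m%:R) * (q - p) <= 0 :> R.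
  by rewrite mulr_ge0_le0 ?subr_ge0 ?ler_nat // subr_le0 ltW.
move/(conj H)/andP; rewrite -eq_le eq_sym mulf_eq0 !subr_eq0 eqr_nat.
by rewrite (lt_eqF ltqp) orbF => /eqP ->; rewrite mulrC.
Qed.

Lemma rearrange_lt (R : realDomainType) (p q : R) (m n : nat) :
  0 <= p -> 0 <= q -> 0 < (n%:R - m%:R) * (q - p) -> 0 < p ^+ m * q ^+ n ->
  p ^+ n * q ^+ m < p ^+ m * q ^+ n.
Proof.
move=> p0 q0 H P.
wlog lemn : p q m n p0 q0 H P / (m <= n)%N.
  move=> W; have [|/ltnW lenm] := leqP m n; first exact: W.
  rewrite [p ^+ n * _]mulrC [p ^+ m * _]mulrC; apply: W => //.
  - by rewrite -mulrNN !opprB.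
  - by rewrite mulrC.
have ltmn : (m < n)%N.
  rewrite ltn_neqAle lemn andbT; apply: contraTneq H => ->.
  by rewrite subrr mul0r ltxx.
have ltpq : p < q.
  by move: H; rewrite pmulr_rgt0 ?subr_gt0 ?ltr_nat.
have [E1 E2] := expr_split p q m (n - m); rewrite subnK // in E1 E2.
rewrite E1 E2 ltr_pM2l ?ltrXn2r ?subn_eq0 -?ltnNge //.
by move: P; rewrite E2 pmulr_lgt0 // exprn_gt0 // (le_lt_trans p0).
Qed.

Lemma sum_ge0_eq0 (R : numDomainType) (T : eqType) (s : seq T) (F : T -> R) :
  (forall a, a \in s -> 0 <= F a) -> \sum_(a <- s) F a = 0 ->
  forall a, a \in s -> F a = 0.
Proof.
move=> F_ge0 /eqP; rewrite big_seq psumr_eq0 // => /allP Fs a aS.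
by apply/eqP; have := Fs a aS; rewrite aS.
Qed.

Lemma sum_gt0 (R : numDomainType) (T : eqType) (s : seq T) (F : T -> R) (a0 : T) :
  uniq s -> (forall a, a \in s -> 0 <= F a) -> a0 \in s -> 0 < F a0 ->
  0 < \sum_(a <- s) F a.
Proof.
move=> us F_ge0 a0s Fa0; rewrite (bigD1_seq a0) //= ltr_wpDr //.
by rewrite big_seq_cond sumr_ge0 // => a /andP [/F_ge0].
Qed.

Lemma hull_affine (R : realFieldType) (A : seq lattice) (x : R * R) :
  in_hull A x -> exists lam : lattice -> R, (forall a, a \in A -> 0 <= lam a) /\
    forall g, hR g x = \sum_(a <- A) lam a * (hZ g a)%:~R.
Proof.
case=> lam [l0 ls l1 l2]; exists lam; split => // g.
rewrite /hR -l1 -l2 -[g.2%:~R]mulr1 -ls !mulr_sumr -!big_split /=.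
by apply: eq_bigr => a _; rewrite /hZ /toR /=; ring.
Qed.

Lemma hull_nonneg (R : realFieldType) (A : seq lattice) (g : affform) (x : R * R) :
  in_hull A x -> (forall a, a \in A -> 0 <= hZ g a) -> 0 <= hR g x.
Proof.
move=> /hull_affine [lam [l0 ->]] g_ge0.
by rewrite big_seq sumr_ge0 // => a aA; rewrite mulr_ge0 ?l0 ?ler0z ?g_ge0.
Qed.

(* On the edge {h = 0} of the hull, only the points of A on that edge carry
   weight; hence a form nonnegative on those points is nonnegative there. *)
Lemma edge_nonneg (R : realFieldType) (A : seq lattice) (h g : affform) (x : R * R) :
  (forall a, a \in A -> 0 <= hZ h a) -> in_edge A h x ->
  (forall a, a \in A -> hZ h a = 0 -> 0 <= hZ g a) -> 0 <= hR g x.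
Proof.
move=> h_ge0 [/hull_affine [lam [l0 Hl]] hx0] g_ge0.
have lam_off : forall a, a \in A -> lam a * (hZ h a)%:~R = 0.
  apply: sum_ge0_eq0; last by rewrite -Hl.
  by move=> a aA; rewrite mulr_ge0 ?l0 ?ler0z ?h_ge0.
rewrite Hl big_seq sumr_ge0 // => a aA.
have [ha|ha] := eqVneq (hZ h a) 0; first by rewrite mulr_ge0 ?l0 ?ler0z ?g_ge0.
move: (lam_off a aA) => /eqP; rewrite mulf_eq0 intr_eq0 (negPf ha) orbF.
by move/eqP ->; rewrite mul0r.
Qed.

Lemma primitive_multiple (g' : affform) (v : lattice) :
  (g'.1.1 != 0) || (g'.1.2 != 0) -> hZ g' v = 0 ->
  exists2 g : affform, gcdz g.1.1 g.1.2 = 1 &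
    exists2 k : int, 0 < k & forall p, hZ g' p = k * hZ g p.
Proof.
move=> nz g'v.
set k := gcdz g'.1.1 g'.1.2.
have kpos : 0 < k by rewrite lt_def gcdz_eq0 negb_and nz /k.
have [a Ea] := dvdzP (dvdz_gcdl g'.1.1 g'.1.2).
have [b Eb] := dvdzP (dvdz_gcdr g'.1.1 g'.1.2).
exists ((a, b), - (a * v.1 + b * v.2)).
  have := mulz_gcdl a b k; rewrite -Ea -Eb -/k gez0_abs ?ltW //.
  by move=> E; apply: (mulIf (negbT (gt_eqF kpos))); rewrite mul1r.
exists k => // p; rewrite /hZ.
have -> : g'.2 = - (g'.1.1 * v.1 + g'.1.2 * v.2).
  by move: g'v; rewrite /hZ addrC => /eqP; rewrite addr_eq0 => /eqP.
move: Ea Eb; rewrite -/k => -> ->; rewrite /=; ring.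
Qed.

Lemma supporting_edge (A : seq lattice) (H : seq affform) (g' : affform) (p q : lattice) :
  (forall g, g \in H <-> is_edge_ineq A g) ->
  (g'.1.1 != 0) || (g'.1.2 != 0) -> (forall a, a \in A -> 0 <= hZ g' a) ->
  p \in A -> q \in A -> p != q -> hZ g' p = 0 -> hZ g' q = 0 ->
  exists2 g, g \in H & exists2 k : int, 0 < k & forall a, hZ g' a = k * hZ g a.
Proof.
move=> HH nz g'_ge0 pA qA npq g'p g'q.
have [g gprim [k kpos g'E]] := primitive_multiple nz g'p.
have gzero a : hZ g' a = 0 -> hZ g a = 0.
  by rewrite g'E => /eqP; rewrite mulf_eq0 (gt_eqF kpos) => /eqP.
exists g; last by exists k.
apply/HH; split => //; last by exists p, q; split; rewrite ?gzero.
by move=> a /g'_ge0; rewrite g'E pmulr_rge0.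
Qed.

(* The pencil of lines through v, parametrized by a point b: the form
   t(p) h(b) - t(b) h(p), where t = s (tau - tau v) is the signed tangent
   coordinate measured from v. *)
Definition pencil_form (h : affform) (s : int) (v b : lattice) : affform :=
  let t := s * hZ (tangent h) b - s * hZ (tangent h) v in
  ((s * - h.1.2 * hZ h b - t * h.1.1, s * h.1.1 * hZ h b - t * h.1.2),
   - s * hZ (tangent h) v * hZ h b - t * h.2).

Lemma pencil_formE (h : affform) (s : int) (v b p : lattice) :
  let t q := s * hZ (tangent h) q - s * hZ (tangent h) v in
  hZ (pencil_form h s v b) p = t p * hZ h b - t b * hZ h p.
Proof. by rewrite /pencil_form /tangent /hZ /=; ring. Qed.

Lemma pencil_form_nonconst (h : affform) (s : int) (v b : lattice) :
  s = 1 \/ s = -1 -> 0 < normsq h -> hZ h b != 0 ->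
  ((pencil_form h s v b).1.1 != 0) || ((pencil_form h s v b).1.2 != 0).
Proof.
move=> s1 N hb; rewrite -negb_and; apply/negP => /andP [/eqP e1 /eqP e2].
have : slope (pencil_form h s v b) h = s * normsq h * hZ h b.
  by rewrite /slope /normsq /pencil_form /=; ring.
rewrite /slope e1 e2 !mul0r addr0 => /esym/eqP.
by rewrite !mulf_eq0 (gt_eqF N) (negPf hb) !orbF; case: s1 => ->.
Qed.

(* The other edge at an endpoint v of the edge {h = 0}: rotating the
   supporting line around v until it meets the point b of A off the edge of
   minimal slope t(b)/h(b) yields an edge inequality g vanishing at v and
   positive at all other points of A on the edge.  The sign s selects which
   endpoint (minimal or maximal tangent coordinate). *)
Lemma adjacent_edge (A : seq lattice) (H : seq affform) (h : affform) (v : lattice) (s : int) :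
  (forall g, g \in H <-> is_edge_ineq A g) -> is_edge_ineq A h -> s = 1 \/ s = -1 ->
  v \in A -> hZ h v = 0 ->
  (forall a, a \in A -> hZ h a = 0 -> s * hZ (tangent h) v <= s * hZ (tangent h) a) ->
  (exists2 b, b \in A & hZ h b != 0) ->
  exists2 g, g \in H & hZ g v = 0 /\
    forall a, a \in A -> hZ h a = 0 -> a != v -> 0 < hZ g a.
Proof.
move=> HH [hprim h_ge0 _] s1 vA hv vmin [b0 b0A b0n].
pose t p : int := s * hZ (tangent h) p - s * hZ (tangent h) v.
have b0O : b0 \in [seq a <- A | hZ h a != 0] by rewrite mem_filter b0n b0A.
have [b] := exists_min (fun p => (t p)%:~R / (hZ h p)%:~R : rat) b0O.
rewrite mem_filter => /andP [bn bA] bmin.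
have hb_gt0 : 0 < hZ h b by rewrite lt_def bn h_ge0.
pose g' := pencil_form h s v b; have g'E p := pencil_formE h s v b p.
have g'_ge0 p : p \in A -> 0 <= hZ g' p.
  move=> pA; rewrite g'E; have [hp0|hpn] := eqVneq (hZ h p) 0.
    by rewrite hp0 mulr0 subr0 mulr_ge0 ?h_ge0 // subr_ge0 vmin.
  have hp_gt0 : 0 < hZ h p by rewrite lt_def hpn h_ge0.
  have := bmin p; rewrite mem_filter hpn pA => /(_ isT).
  rewrite ler_pdivrMr ?ltr0z // mulrAC ler_pdivlMr ?ltr0z //.
  by rewrite -!intrM ler_int subr_ge0 mulrC.
have nz := pencil_form_nonconst v s1 (normsq_gt0 hprim) bn.
have vb : v != b by apply: contraNneq bn => <-; rewrite hv.
have g'v : hZ g' v = 0 by rewrite g'E hv subrr !mul0r mulr0 subrr.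
have g'b : hZ g' b = 0 by rewrite g'E mulrC subrr.
have [g gH [k kpos g'k]] := supporting_edge HH nz g'_ge0 vA bA vb g'v g'b.
exists g => //; split.
  by apply/eqP; move: g'v; rewrite g'k => /eqP; rewrite mulf_eq0 (gt_eqF kpos).
move=> a aA ha nav; rewrite -(pmulr_rgt0 _ kpos) -g'k g'E ha mulr0 subr0.
rewrite pmulr_lgt0 // subr_gt0 lt_def vmin // andbT.
apply: contra nav => /eqP E; apply/eqP/(level_point_uniqueZ (normsq_gt0 hprim)).
  by rewrite ha hv.
by case: s1 E => ->; rewrite ?mul1r ?mulN1r // => /oppr_inj.
Qed.

(* A point of A cut out by two edge inequalities is a vertex: h + g is a
   linear functional uniquely minimized at it. *)
Lemma endpoint_vertex (R : realFieldType) (A : seq lattice) (h g : affform) (v : lattice) :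
  v \in A -> hZ h v = 0 -> hZ g v = 0 ->
  (forall a, a \in A -> 0 <= hZ h a) -> (forall a, a \in A -> 0 <= hZ g a) ->
  (forall a, a \in A -> hZ h a = 0 -> a != v -> 0 < hZ g a) ->
  is_vertex (R := R) A v.
Proof.
move=> vA hv gv h_ge0 g_ge0 g_gt0; split => //.
exists ((h.1.1 + g.1.1)%:~R, (h.1.2 + g.1.2)%:~R) => p pA npv /=.
have : (hZ h v + hZ g v)%:~R < (hZ h p + hZ g p)%:~R :> R.
  rewrite hv gv addr0 ltr0z; have [hp|hp] := eqVneq (hZ h p) 0.
    by rewrite hp add0r g_gt0.
  by rewrite ltr_pwDl ?g_ge0 // lt_def hp h_ge0.
rewrite /hZ /toR /= !rmorphD !rmorphM /=; lra.
Qed.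

Lemma edge_off_point (A : seq lattice) (h : affform) :
  is_polygon A -> is_edge_ineq A h -> exists2 b, b \in A & hZ h b != 0.
Proof.
move=> [a0 [a1 [a2 [a0A a1A a2A D]]]] [hprim _ _].
have [/hasP [b bA hb]|/hasPn onA] := boolP (has (fun b => hZ h b != 0) A); first by exists b.
have zero a : a \in A -> hZ h a = 0 by move=> /onA /negPn /eqP.
move: D; have := orient_det a2 (zero a0 a0A) (zero a1 a1A).
rewrite zero // mulr0 oppr0 => /eqP; rewrite mulf_eq0 (gt_eqF (normsq_gt0 hprim)).
by move=> /eqP ->; rewrite eqxx.
Qed.

Lemma edge_endpoints (A : seq lattice) (h : affform) : is_edge_ineq A h ->
  exists v0 v1, [/\ [/\ v0 \in A, v1 \in A, hZ h v0 = 0 & hZ h v1 = 0], v0 != v1,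
    (forall a, a \in A -> hZ h a = 0 -> hZ (tangent h) v0 <= hZ (tangent h) a) &
    (forall a, a \in A -> hZ h a = 0 -> hZ (tangent h) a <= hZ (tangent h) v1)].
Proof.
move=> [hprim _ [p [q [pA qA npq hp hq]]]].
have onE a : a \in A -> hZ h a = 0 -> a \in [seq a <- A | hZ h a == 0].
  by move=> aA ha; rewrite mem_filter ha eqxx aA.
have [v0 + v0_min] := exists_min (hZ (tangent h)) (onE p pA hp).
rewrite mem_filter => /andP [/eqP hv0 v0A].
have [v1 + v1_max] := exists_min (fun a => - hZ (tangent h) a) (onE p pA hp).
rewrite mem_filter => /andP [/eqP hv1 v1A].
have v0_le a : a \in A -> hZ h a = 0 -> hZ (tangent h) v0 <= hZ (tangent h) a.
  by move=> aA ha; apply/v0_min/onE.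
have v1_ge a : a \in A -> hZ h a = 0 -> hZ (tangent h) a <= hZ (tangent h) v1.
  by move=> aA ha; rewrite -lerN2; apply/v1_max/onE.
exists v0, v1; split => //; apply: contra npq => /eqP v01.
have at_v0 a : a \in A -> hZ h a = 0 -> a = v0.
  move=> aA ha; apply: (level_point_uniqueZ (normsq_gt0 hprim)); first by rewrite ha hv0.
  by apply/eqP; rewrite eq_le v0_le // andbT v01 v1_ge.
by rewrite (at_v0 p pA hp) (at_v0 q qA hq).
Qed.

(* Weak compatibility fixes a sign sg: for points a, a' on the edge
   (in tangent order) and b off the edge, the triangle (a, a', b) always has
   the same orientation, so sg * det3 (f a) (f a') (f b) is never negative. *)
Lemma edge_orientation_sign (R : realFieldType) (A : seq lattice) (f : lattice -> R * R)
  (h : affform) : weakly_compatible A f -> is_edge_ineq A h ->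
  exists2 sg : R, sg != 0 & forall a a' b, a \in A -> a' \in A -> b \in A ->
    hZ h a = 0 -> hZ h a' = 0 -> hZ (tangent h) a < hZ (tangent h) a' -> hZ h b != 0 ->
    0 <= sg * det3 (f a) (f a') (f b).
Proof.
move=> [a0 [a1 [a2 [[a0A a1A a2A] D0 FD0 compat]]]] [hprim h_ge0 _].
set rho := sgz (det3 a0 a1 a2); set phi := sgz (det3 (f a0) (f a1) (f a2)).
exists (- (rho * phi))%:~R.
  by rewrite intr_eq0 oppr_eq0 mulf_eq0 !sgz_eq0 negb_or D0 FD0.
move=> a a' b aA a'A bA ha ha' taa' hb.
have D_lt0 : det3 a a' b < 0.
  rewrite -(pmulr_rlt0 _ (normsq_gt0 hprim)) orient_det // oppr_lt0.
  by rewrite mulr_gt0 ?subr_gt0 // lt_def hb h_ge0.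
set K := det3 (f a) (f a') (f b).
have [K0|Kn] := eqVneq K 0; first by rewrite K0 mulr0.
suff -> : - (rho * phi) = sgz K by rewrite -sgrEz -normrEsg normr_ge0.
have [rho_neg|rho_pos] : rho = -1 \/ rho = 1 by rewrite /rho; case: sgzP D0 => //; [right|left].
  rewrite rho_neg mulN1r opprK; symmetry; apply: compat => //; first by rewrite lt_eqF.
  by rewrite ltr0_sgz // -/rho rho_neg.
have D' : 0 < det3 a' a b by rewrite det3_swap oppr_gt0.
have Kn' : det3 (f a') (f a) (f b) != 0 by rewrite det3_swap oppr_eq0.
have := compat a' a b a'A aA bA (lt0r_neq0 D') _ Kn'.
rewrite gtr0_sgz // -/rho rho_pos -/phi det3_swap sgzN => /(_ erefl) <-.
by rewrite mul1r opprK.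
Qed.

Lemma ltr_prod_one (R : realDomainType) (I : eqType) (r : seq I) (E1 E2 : I -> R) (i0 : I) :
  uniq r -> i0 \in r -> (forall i, i \in r -> 0 <= E1 i <= E2 i) ->
  E1 i0 < E2 i0 -> 0 < \prod_(i <- r) E2 i ->
  \prod_(i <- r) E1 i < \prod_(i <- r) E2 i.
Proof.
move=> ur i0r E12 lt0 P2; move: P2; rewrite !(bigD1_seq i0) //= => P2.
have [le10 _] := andP (E12 i0 i0r).
have le_rest : \prod_(i <- r | i != i0) E1 i <= \prod_(i <- r | i != i0) E2 i.
  by rewrite big_seq_cond [leRHS]big_seq_cond ler_prod // => i /andP [/E12].
have rest2_gt0 : 0 < \prod_(i <- r | i != i0) E2 i.
  by move: P2; rewrite pmulr_rgt0 // (le_lt_trans le10).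
by rewrite (le_lt_trans (ler_wpM2l le10 le_rest)) // ltr_pM2r.
Qed.

Lemma level_pair_sign (R : realFieldType) (g h : affform) (a a' : lattice) (z1 z2 : R * R) :
  hZ h a = hZ h a' -> hR h z1 = hR h z2 ->
  (normsq h)%:~R ^+ 2 * ((hZ g a' - hZ g a)%:~R * (hR g z2 - hR g z1)) =
  ((hZ (tangent h) a' - hZ (tangent h) a)%:~R * (hR (tangent h) z2 - hR (tangent h) z1)) *
  (slope g h)%:~R ^+ 2 :> R.
Proof.
move=> Ea Ez; have := level_slopeZ g Ea => /(congr1 (fun n : int => n%:~R : R)).
rewrite !rmorphM /= => EZ; have ER := level_slope g Ez.
transitivity (((normsq h)%:~R * (hZ g a' - hZ g a)%:~R) *
              ((normsq h)%:~R * (hR g z2 - hR g z1)) :> R); first by ring.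
by rewrite EZ ER; ring.
Qed.

(* One factor of the cross-ratio inequality for Bernstein polynomials:
   moving both the lattice point and the evaluation point forward along the
   edge can only increase the product of the g-factors. *)
Lemma bernstein_factor_le (R : realFieldType) (g h : affform) (a a' : lattice) (z1 z2 : R * R) :
  0 < normsq h -> hZ h a = hZ h a' -> hR h z1 = hR h z2 ->
  0 <= hZ g a -> 0 <= hZ g a' -> 0 <= hR g z1 -> 0 <= hR g z2 ->
  hZ (tangent h) a <= hZ (tangent h) a' -> hR (tangent h) z1 <= hR (tangent h) z2 ->
  hR g z1 ^+ `|hZ g a'| * hR g z2 ^+ `|hZ g a| <=
  hR g z1 ^+ `|hZ g a| * hR g z2 ^+ `|hZ g a'|.
Proof.
move=> N Ea Ez ga ga' gz1 gz2 ta tz; apply: rearrange_le => //.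
have N2 : 0 < (normsq h)%:~R ^+ 2 :> R by rewrite exprn_gt0 ?ltr0z.
rewrite !natr_absz !ger0_norm // -intrB -(pmulr_rge0 _ N2) level_pair_sign //.
by rewrite mulr_ge0 ?sqr_ge0 ?mulr_ge0 ?ler0z ?subr_ge0.
Qed.

Lemma bernstein_factor_lt (R : realFieldType) (g h : affform) (a a' : lattice) (z1 z2 : R * R) :
  0 < normsq h -> slope g h != 0 -> hZ h a = hZ h a' -> hR h z1 = hR h z2 ->
  0 <= hZ g a -> 0 <= hZ g a' -> 0 < hR g z1 -> 0 < hR g z2 ->
  hZ (tangent h) a < hZ (tangent h) a' -> hR (tangent h) z1 < hR (tangent h) z2 ->
  hR g z1 ^+ `|hZ g a'| * hR g z2 ^+ `|hZ g a| <
  hR g z1 ^+ `|hZ g a| * hR g z2 ^+ `|hZ g a'|.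
Proof.
move=> N sl Ea Ez ga ga' gz1 gz2 ta tz.
apply: rearrange_lt; rewrite ?ltW //; last by rewrite mulr_gt0 ?exprn_gt0.
have N2 : 0 < (normsq h)%:~R ^+ 2 :> R by rewrite exprn_gt0 ?ltr0z.
rewrite !natr_absz !ger0_norm // -intrB -(pmulr_rgt0 _ N2) level_pair_sign //.
by rewrite mulr_gt0 ?exprn_even_gt0 ?intr_eq0 ?mulr_gt0 ?ltr0z ?subr_gt0.
Qed.

Lemma bernstein_ge0 (R : realFieldType) (H : seq affform) (a : lattice) (x : R * R) :
  (forall g, g \in H -> 0 <= hR g x) -> 0 <= bernstein H a x.
Proof.
by move=> Hx; rewrite /bernstein big_seq prodr_ge0 // => g /Hx; apply: exprn_ge0.
Qed.

Lemma bernstein_gt0 (R : realFieldType) (H : seq affform) (a : lattice) (x : R * R) :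
  (forall g, g \in H -> 0 < hR g x \/ hZ g a = 0) -> 0 < bernstein H a x.
Proof.
move=> Hx; rewrite /bernstein big_seq prodr_gt0 // => g /Hx [gx|->]; last by rewrite expr0.
by rewrite exprn_gt0.
Qed.

Lemma bernstein_eq0 (R : realFieldType) (H : seq affform) (a : lattice) (x : R * R) (g : affform) :
  g \in H -> hR g x = 0 -> hZ g a != 0 -> bernstein H a x = 0.
Proof.
move=> gH gx ga; apply/eqP; rewrite /bernstein prodf_seq_eq0.
by apply/hasP; exists g; rewrite //= gx expr0n /= absz_eq0 (negPf ga).
Qed.

Lemma bernstein_at_self (R : realFieldType) (H : seq affform) (a : lattice) :
  (forall g, g \in H -> 0 <= hZ g a) -> 0 < bernstein H a (toR a : R * R).
Proof.
move=> Ha; apply: bernstein_gt0 => g gH; rewrite hR_toR.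
by have := Ha g gH; rewrite le_eqVlt => /orP [/eqP <-|ga]; [right | left; rewrite ltr0z].
Qed.

Lemma bernstein_cross (R : realFieldType) (H : seq affform) (a a' : lattice) (z1 z2 : R * R) :
  bernstein H a' z1 * bernstein H a z2 =
  \prod_(g <- H) (hR g z1 ^+ `|hZ g a'| * hR g z2 ^+ `|hZ g a|).
Proof. by rewrite /bernstein -big_split. Qed.

Lemma bernstein_cross_le (R : realFieldType) (H : seq affform) (h : affform) (a a' : lattice)
  (z1 z2 : R * R) :
  0 < normsq h -> hZ h a = hZ h a' -> hR h z1 = hR h z2 ->
  (forall g, g \in H -> [/\ 0 <= hZ g a, 0 <= hZ g a', 0 <= hR g z1 & 0 <= hR g z2]) ->
  hZ (tangent h) a <= hZ (tangent h) a' -> hR (tangent h) z1 <= hR (tangent h) z2 ->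
  bernstein H a' z1 * bernstein H a z2 <= bernstein H a z1 * bernstein H a' z2.
Proof.
move=> N Ea Ez Hpos ta tz; rewrite !bernstein_cross big_seq [leRHS]big_seq.
apply: ler_prod => g /Hpos [ga ga' gz1 gz2].
by rewrite mulr_ge0 ?exprn_ge0 //=; apply: (bernstein_factor_le N).
Qed.

Lemma bernstein_cross_lt (R : realFieldType) (H : seq affform) (h g0 : affform) (a a' : lattice)
  (z1 z2 : R * R) :
  uniq H -> g0 \in H -> slope g0 h != 0 -> 0 < hR g0 z1 -> 0 < hR g0 z2 ->
  0 < normsq h -> hZ h a = hZ h a' -> hR h z1 = hR h z2 ->
  (forall g, g \in H -> [/\ 0 <= hZ g a, 0 <= hZ g a', 0 <= hR g z1 & 0 <= hR g z2]) ->
  hZ (tangent h) a < hZ (tangent h) a' -> hR (tangent h) z1 < hR (tangent h) z2 ->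
  0 < bernstein H a z1 * bernstein H a' z2 ->
  bernstein H a' z1 * bernstein H a z2 < bernstein H a z1 * bernstein H a' z2.
Proof.
move=> uH g0H sl g0z1 g0z2 N Ea Ez Hpos ta tz; rewrite !bernstein_cross => P.
apply: (ltr_prod_one uH g0H) => //; last first.
  by have [? ? _ _] := Hpos g0 g0H; apply: (bernstein_factor_lt N).
move=> g /Hpos [ga ga' gz1 gz2].
by rewrite mulr_ge0 ?exprn_ge0 //=; apply: (bernstein_factor_le N) => //; apply: ltW.
Qed.

Definition patch_weight (R : realFieldType) (H : seq affform) (w : lattice -> R)
  (x : R * R) (a : lattice) : R := w a * bernstein H a x.

Lemma patch_weightE (R : realFieldType) (A : seq lattice) (H : seq affform)
  (f : lattice -> R * R) (w : lattice -> R) (x : R * R) :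
  patch A H f w x =
  ((\sum_(a <- A) patch_weight H w x a * (f a).1) / \sum_(a <- A) patch_weight H w x a,
   (\sum_(a <- A) patch_weight H w x a * (f a).2) / \sum_(a <- A) patch_weight H w x a).
Proof. by rewrite /patch /patch_weight; congr (_ / _, _ / _); apply: eq_bigr => a _; ring. Qed.

Lemma sum_det (R : comPzRingType) (A : seq lattice) (c : lattice -> R)
  (f : lattice -> R * R) (Z W : R * R) :
  \sum_(a <- A) c a * det3 (f a) Z W =
  (\sum_(a <- A) c a * (f a).1) * (Z.2 - W.2) - (\sum_(a <- A) c a * (f a).2) * (Z.1 - W.1)
  + (\sum_(a <- A) c a) * (Z.1 * W.2 - Z.2 * W.1).
Proof.
elim: A => [|a A IH]; first by rewrite !big_nil; ring.
by rewrite !big_cons IH /det3; ring.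
Qed.

Lemma patch_det (R : realFieldType) (A : seq lattice) (H : seq affform)
  (f : lattice -> R * R) (w : lattice -> R) (x Z W : R * R) :
  0 < \sum_(a <- A) patch_weight H w x a ->
  \sum_(a <- A) patch_weight H w x a * det3 (f a) Z W =
  (\sum_(a <- A) patch_weight H w x a) * det3 (patch A H f w x) Z W.
Proof.
set c := patch_weight H w x => c_gt0; rewrite sum_det (patch_weightE A H f w x) /det3 /= -/c.
have S0 : \sum_(a <- A) c a != 0 by rewrite gt_eqF.
by field.
Qed.

Lemma patch_vertex (R : realFieldType) (A : seq lattice) (H : seq affform)
  (f : lattice -> R * R) (w : lattice -> R) (x : R * R) (v : lattice) :
  uniq A -> v \in A -> 0 < w v -> 0 < bernstein H v x ->
  (forall a, a \in A -> a != v -> bernstein H a x = 0) ->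
  patch A H f w x = f v.
Proof.
move=> uA vA wv bv others; rewrite patch_weightE.
set c := patch_weight H w x.
have single F : \sum_(a <- A) c a * F a = c v * F v.
  rewrite (bigD1_seq v) //= big_seq_cond big1 ?addr0 // => a /andP [aA nav].
  by rewrite /c /patch_weight others // mulr0 mul0r.
have cv : c v != 0 by rewrite /c /patch_weight mulf_neq0 // gt_eqF.
have total : \sum_(a <- A) c a = c v.
  by rewrite -[RHS]mulr1 -single; apply: eq_bigr => a _; rewrite mulr1.
by rewrite !single total !(mulrC (c v)) !mulfK //; case: (f v).
Qed.

Section EdgeRestriction.

Variables (R : realFieldType) (A : seq lattice) (H : seq affform)
  (f : lattice -> R * R) (w : lattice -> R) (h : affform).
Hypotheses (uA : uniq A) (uH : uniq H) (HH : forall g, g \in H <-> is_edge_ineq A g)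
  (w_gt0 : forall a, a \in A -> 0 < w a) (hH : h \in H).

Local Notation tau := (hZ (tangent h)).
Local Notation tauR := (hR (tangent h)).
Local Notation weight := (patch_weight H w).
Local Notation F := (patch A H f w).

Lemma H_ge0 g a : g \in H -> a \in A -> 0 <= hZ g a.
Proof. by move=> /HH [_ g_ge0 _] /g_ge0. Qed.

Lemma h_normsq_gt0 : 0 < normsq h.
Proof. by have [hprim _ _] := (HH h).1 hH; apply: normsq_gt0. Qed.

Lemma edge_tau_inj a b : hZ h a = 0 -> hZ h b = 0 -> tau a = tau b -> a = b.
Proof. by move=> ha hb; apply: level_point_uniqueZ h_normsq_gt0 _; rewrite ha hb. Qed.

Lemma edge_point_at (z : R * R) a :
  in_edge A h z -> hZ h a = 0 -> tauR z = (tau a)%:~R -> z = toR a.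
Proof.
by move=> [_ hz] ha tz; apply: (level_point_unique h_normsq_gt0); rewrite hR_toR // hz ha.
Qed.

Lemma edge_forms_ge0 (z : R * R) g : in_edge A h z -> g \in H -> 0 <= hR g z.
Proof. by move=> [zA _] gH; apply: hull_nonneg zA _ => a; apply: H_ge0. Qed.

Lemma weight_ge0 (z : R * R) a : in_edge A h z -> a \in A -> 0 <= weight z a.
Proof.
move=> ez aA; apply: mulr_ge0; first exact: ltW (w_gt0 aA).
by apply: bernstein_ge0 => g; apply: edge_forms_ge0.
Qed.

Lemma weight_off_edge (z : R * R) a : in_edge A h z -> hZ h a != 0 -> weight z a = 0.
Proof. by move=> [_ hz] ha; rewrite /patch_weight (bernstein_eq0 hH hz ha) mulr0. Qed.

Lemma patch_at_endpoint v g : v \in A -> hZ h v = 0 -> g \in H -> hZ g v = 0 ->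
  (forall a, a \in A -> hZ h a = 0 -> a != v -> 0 < hZ g a) -> F (toR v) = f v.
Proof.
move=> vA hv gH gv g_gt0; apply: patch_vertex => //; first exact: w_gt0.
  by apply: bernstein_at_self => g' g'H; apply: H_ge0.
move=> a aA nav; have [ha|ha] := eqVneq (hZ h a) 0.
  by apply: (bernstein_eq0 gH); rewrite ?hR_toR ?gv // gt_eqF ?g_gt0.
by apply: (bernstein_eq0 hH); rewrite ?hR_toR ?hv.
Qed.

Variables (v0 v1 : lattice) (g0 : affform).
Hypotheses (v0A : v0 \in A) (v1A : v1 \in A) (hv0 : hZ h v0 = 0) (hv1 : hZ h v1 = 0)
  (v0_min : forall a, a \in A -> hZ h a = 0 -> tau v0 <= tau a)
  (v1_max : forall a, a \in A -> hZ h a = 0 -> tau a <= tau v1)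
  (v01 : v0 != v1)
  (g0H : g0 \in H) (g0v0 : hZ g0 v0 = 0)
  (g0_gt0 : forall a, a \in A -> hZ h a = 0 -> a != v0 -> 0 < hZ g0 a).

Lemma edge_range (z : R * R) : in_edge A h z ->
  (tau v0)%:~R <= tauR z /\ tauR z <= (tau v1)%:~R.
Proof.
have [_ h_ge0 _] := (HH h).1 hH; move=> ez.
pose lo : affform := ((tangent h).1, - tau v0).
pose hi : affform := ((h.1.2, - h.1.1), tau v1).
have loR : hR lo z = tauR z - (tau v0)%:~R by rewrite /hR /=; ring.
have hiR : hR hi z = (tau v1)%:~R - tauR z.
  by set t := tau v1; rewrite /hR /tangent /=; ring.
have loZ a : hZ lo a = tau a - tau v0 by rewrite /lo /hZ /tangent /=; ring.
have hiZ a : hZ hi a = tau v1 - tau a by rewrite /hi /hZ /tangent /=; ring.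
split; rewrite -subr_ge0 -?loR -?hiR; apply: (edge_nonneg h_ge0 ez) => a aA ha.
- by rewrite loZ subr_ge0 v0_min.
- by rewrite hiZ subr_ge0 v1_max.
Qed.

Definition edge_interior (z : R * R) : Prop :=
  [/\ in_edge A h z, (tau v0)%:~R < tauR z & tauR z < (tau v1)%:~R].

(* A form of H vanishing at an interior point of the edge vanishes on the
   whole edge (it is nonnegative at both endpoints and affine along it). *)
Lemma edge_form_vanishes (z : R * R) g : edge_interior z -> g \in H -> hR g z = 0 ->
  forall a, a \in A -> hZ h a = 0 -> hZ g a = 0.
Proof.
move=> [[_ hz] t0 t1] gH gz a aA ha.
have NR : 0 < (normsq h)%:~R :> R by rewrite ltr0z h_normsq_gt0.
have K0 := @level_slope R g h (toR v0) z; rewrite !hR_toR hv0 hz gz in K0.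
have K1 := @level_slope R g h z (toR v1); rewrite !hR_toR hv1 hz gz in K1.
have gv0 : 0 <= (hZ g v0)%:~R :> R by rewrite ler0z H_ge0.
have gv1 : 0 <= (hZ g v1)%:~R :> R by rewrite ler0z H_ge0.
move: (K0 erefl) (K1 erefl); set L := (slope g h)%:~R : R => {}K0 {}K1.
have L0 : L = 0 by nra.
have gv0_eq0 : hZ g v0 = 0.
  apply/eqP; move: K0; rewrite L0 mulr0 sub0r mulrN => /eqP.
  by rewrite oppr_eq0 mulf_eq0 (gt_eqF NR) intr_eq0.
move/eqP: L0; rewrite intr_eq0 => /eqP sl0.
move: (level_slopeZ g (etrans hv0 (esym ha))); rewrite sl0 gv0_eq0 mulr0 subr0 => /eqP.
by rewrite mulf_eq0 (gt_eqF h_normsq_gt0) => /eqP.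
Qed.

Lemma interior_bernstein_gt0 (z : R * R) a :
  edge_interior z -> a \in A -> hZ h a = 0 -> 0 < bernstein H a z.
Proof.
move=> iz aA ha; have [ez _ _] := iz; apply: bernstein_gt0 => g gH.
have := edge_forms_ge0 ez gH; rewrite le_eqVlt => /orP [/eqP gz|]; last by left.
by right; apply: edge_form_vanishes iz gH (esym gz) a aA ha.
Qed.

Lemma interior_weight_gt0 (z : R * R) a :
  edge_interior z -> a \in A -> hZ h a = 0 -> 0 < weight z a.
Proof. by move=> iz aA ha; rewrite /patch_weight mulr_gt0 ?w_gt0 ?interior_bernstein_gt0. Qed.

Lemma interior_weight_sum_gt0 (z : R * R) :
  edge_interior z -> 0 < \sum_(a <- A) weight z a.
Proof.
move=> iz; have [ez _ _] := iz; apply: (sum_gt0 uA _ v0A).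
  by move=> a; apply: weight_ge0.
exact: interior_weight_gt0.
Qed.

Lemma interior_g0_gt0 (z : R * R) : edge_interior z -> 0 < hR g0 z.
Proof.
move=> iz; have [ez _ _] := iz; rewrite lt_def edge_forms_ge0 // andbT.
apply/eqP => g0z; have := g0_gt0 v1A hv1.
by rewrite eq_sym v01 (edge_form_vanishes iz g0H g0z v1A hv1) ltxx => /(_ isT).
Qed.

Lemma slope_g0_neq0 : slope g0 h != 0.
Proof.
apply/eqP => sl0; have := level_slopeZ g0 (etrans hv0 (esym hv1)).
rewrite sl0 mulr0 g0v0 subr0 => /eqP; rewrite mulf_eq0 (gt_eqF h_normsq_gt0) /= => /eqP g0v1.
by have := g0_gt0 v1A hv1; rewrite eq_sym v01 g0v1 ltxx => /(_ isT).
Qed.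

Variable sg : R.
Hypotheses (sg_neq0 : sg != 0)
  (orient : forall a a' b, a \in A -> a' \in A -> b \in A -> hZ h a = 0 -> hZ h a' = 0 ->
     tau a < tau a' -> hZ h b != 0 -> 0 <= sg * det3 (f a) (f a') (f b)).

Lemma orient_from_v0 b a : b \in A -> hZ h b != 0 -> a \in A -> hZ h a = 0 ->
  0 <= sg * det3 (f v0) (f a) (f b).
Proof.
move=> bA hb aA ha; have [->|nav] := eqVneq a v0; first by rewrite det3_pp mulr0.
apply: orient => //; rewrite lt_def v0_min // andbT.
by apply: contra nav => /eqP /(edge_tau_inj ha hv0) ->.
Qed.

Lemma orient_to_v1 b a : b \in A -> hZ h b != 0 -> a \in A -> hZ h a = 0 ->
  0 <= sg * det3 (f a) (f v1) (f b).
Proof.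
move=> bA hb aA ha; have [->|nav] := eqVneq a v1; first by rewrite det3_pp mulr0.
apply: orient => //; rewrite lt_def v1_max // andbT.
by apply: contra nav => /eqP /esym /(edge_tau_inj ha hv1) ->.
Qed.

Lemma interior_det_vanish (z Z W : R * R) : edge_interior z -> det3 (F z) Z W = 0 ->
  (forall a, a \in A -> hZ h a = 0 -> 0 <= sg * det3 (f a) Z W) ->
  forall a, a \in A -> hZ h a = 0 -> det3 (f a) Z W = 0.
Proof.
move=> iz Fz sgn; have [ez _ _] := iz.
have S : \sum_(a <- A) sg * (weight z a * det3 (f a) Z W) = 0.
  by rewrite -mulr_sumr patch_det ?interior_weight_sum_gt0 // Fz !mulr0.
have term_ge0 a : a \in A -> 0 <= sg * (weight z a * det3 (f a) Z W).
  move=> aA; have [ha|ha] := eqVneq (hZ h a) 0; last by rewrite weight_off_edge // mul0r mulr0.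
  by rewrite mulrCA mulr_ge0 ?weight_ge0 ?sgn.
move=> a aA ha; move/eqP: (sum_ge0_eq0 term_ge0 S aA).
by rewrite mulf_eq0 (negPf sg_neq0) mulf_eq0 (gt_eqF (interior_weight_gt0 iz aA ha)) => /eqP.
Qed.

Hypotheses (fv01 : f v0 != f v1) (off_edge : exists2 b, b \in A & hZ h b != 0)
  (f_span : exists a0 a1 a2,
     [/\ a0 \in A, a1 \in A, a2 \in A & det3 (f a0) (f a1) (f a2) != 0]).

(* The images of the edge cannot all be collinear with every image of a
   point off the edge: otherwise all of f(A) would lie on the line through
   f v0 != f v1, contradicting weak compatibility. *)
Lemma edge_images_not_degenerate :
  ~ (forall b, b \in A -> hZ h b != 0 -> forall a, a \in A -> hZ h a = 0 ->
       det3 (f v0) (f a) (f b) = 0 /\ det3 (f a) (f v1) (f b) = 0).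
Proof.
move=> K; have [b0 b0A hb0] := off_edge.
have line a : a \in A -> det3 (f v0) (f v1) (f a) = 0.
  move=> aA; have [ha|ha] := eqVneq (hZ h a) 0; last by have [] := K a aA ha v1 v1A hv1.
  have [K1 K2] := K b0 b0A hb0 a aA ha; have [K3 _] := K b0 b0A hb0 v1 v1A hv1.
  by rewrite (det3_four _ _ _ (f b0)) K3 K1 det3_swap K2 !subr0.
have [a0 [a1 [a2 [a0A a1A a2A /eqP]]]] := f_span; apply.
exact: det3_collinear fv01 (line a0 a0A) (line a1 a1A) (line a2 a2A).
Qed.

Lemma patch_interior_ne_v0 (z : R * R) : edge_interior z -> F z != f v0.
Proof.
move=> iz; apply/eqP => Fz; apply: edge_images_not_degenerate => b bA hb.
have K1 : forall a, a \in A -> hZ h a = 0 -> det3 (f v0) (f a) (f b) = 0.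
  move=> a aA ha; rewrite det3_cyc; apply: (interior_det_vanish iz) => //.
    by rewrite Fz det3_pqp.
  by move=> a' a'A ha'; rewrite -det3_cyc orient_from_v0.
move=> a aA ha; split; first exact: K1.
apply: (interior_det_vanish iz) => //; last by move=> a'; apply: orient_to_v1.
by rewrite Fz K1.
Qed.

Lemma patch_interior_ne_v1 (z : R * R) : edge_interior z -> F z != f v1.
Proof.
move=> iz; apply/eqP => Fz; apply: edge_images_not_degenerate => b bA hb.
have K2 : forall a, a \in A -> hZ h a = 0 -> det3 (f a) (f v1) (f b) = 0.
  move=> a aA ha; apply: (interior_det_vanish iz) => //; last by move=> a'; apply: orient_to_v1.
  by rewrite Fz det3_pp.
move=> a aA ha; split; last exact: K2.
rewrite det3_cyc; apply: (interior_det_vanish iz) => //.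
  by rewrite Fz -det3_cyc K2.
by move=> a' a'A ha'; rewrite -det3_cyc orient_from_v0.
Qed.

Lemma cross_weight_ge0 (x y : R * R) a a' :
  in_edge A h x -> in_edge A h y -> a \in A -> a' \in A -> hZ h a = 0 -> hZ h a' = 0 ->
  tau a <= tau a' -> tauR x <= tauR y ->
  0 <= weight x a * weight y a' - weight x a' * weight y a.
Proof.
move=> ex ey aA a'A ha ha' ta txy.
have -> : weight x a * weight y a' - weight x a' * weight y a = w a * w a' *
    (bernstein H a x * bernstein H a' y - bernstein H a' x * bernstein H a y).
  by rewrite /patch_weight; ring.
apply: mulr_ge0; first by rewrite mulr_ge0 // ltW ?w_gt0.
rewrite subr_ge0.
apply: (bernstein_cross_le h_normsq_gt0) => //; first by rewrite ha ha'.
  by case: ex => _ ->; case: ey => _ ->.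
move=> g gH; split; rewrite ?H_ge0 //; exact: edge_forms_ge0.
Qed.

Lemma cross_weight_gt0 (x y : R * R) a a' :
  edge_interior x -> edge_interior y -> a \in A -> a' \in A -> hZ h a = 0 -> hZ h a' = 0 ->
  tau a < tau a' -> tauR x < tauR y ->
  0 < weight x a * weight y a' - weight x a' * weight y a.
Proof.
move=> ix iy aA a'A ha ha' ta txy; have [[ex _ _] [ey _ _]] := (ix, iy).
have -> : weight x a * weight y a' - weight x a' * weight y a = w a * w a' *
    (bernstein H a x * bernstein H a' y - bernstein H a' x * bernstein H a y).
  by rewrite /patch_weight; ring.
apply: mulr_gt0; first by rewrite mulr_gt0 ?w_gt0.
rewrite subr_gt0.
apply: (bernstein_cross_lt uH g0H slope_g0_neq0 (interior_g0_gt0 ix) (interior_g0_gt0 iy)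
  h_normsq_gt0) => //.
- by rewrite ha ha'.
- by case: ex => _ ->; case: ey => _ ->.
- by move=> g gH; split; rewrite ?H_ge0 //; exact: edge_forms_ge0.
- by rewrite mulr_gt0 ?interior_bernstein_gt0.
Qed.

(* If F x = F y, the minors weighted by orientations sum to zero:
   both the direct and the transposed double sums are (multiples of) the
   degenerate determinant det3 (F x) (F y) (f b). *)
Lemma cross_sum_vanishes (x y : R * R) b :
  edge_interior x -> edge_interior y -> F x = F y ->
  \sum_(a <- A) \sum_(a' <- A)
    (weight x a * weight y a' - weight x a' * weight y a) * det3 (f a) (f a') (f b) = 0.
Proof.
move=> ix iy Fxy.
have Sx := interior_weight_sum_gt0 ix; have Sy := interior_weight_sum_gt0 iy.
have direct : \sum_(a <- A) \sum_(a' <- A) weight x a * weight y a' * det3 (f a) (f a') (f b) = 0.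
  transitivity (\sum_(a <- A) weight x a *
                 \sum_(a' <- A) weight y a' * det3 (f a') (f b) (f a)).
    apply: eq_bigr => a _; rewrite mulr_sumr; apply: eq_bigr => a' _.
    by rewrite det3_cyc mulrA.
  under eq_bigr => a _ do rewrite patch_det // -Fxy -det3_cyc mulrCA.
  by rewrite -mulr_sumr patch_det // det3_pp !mulr0.
have swapped :
    \sum_(a <- A) \sum_(a' <- A) weight x a' * weight y a * det3 (f a) (f a') (f b) =
    - \sum_(a <- A) \sum_(a' <- A) weight x a * weight y a' * det3 (f a) (f a') (f b).
  rewrite exchange_big /= -sumrN; apply: eq_bigr => a _.
  by rewrite -sumrN; apply: eq_bigr => a' _; rewrite det3_swap mulrN.
rewrite (eq_bigr (fun a => \sum_(a' <- A) weight x a * weight y a' * det3 (f a) (f a') (f b) -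
                         \sum_(a' <- A) weight x a' * weight y a * det3 (f a) (f a') (f b))).
  by rewrite sumrB swapped direct oppr0 subr0.
by move=> a _; rewrite -sumrB; apply: eq_bigr => a' _; rewrite mulrBl.
Qed.

Lemma cross_term_ge0 (x y : R * R) b a a' :
  in_edge A h x -> in_edge A h y -> tauR x <= tauR y -> b \in A -> hZ h b != 0 ->
  a \in A -> a' \in A ->
  0 <= sg * ((weight x a * weight y a' - weight x a' * weight y a) * det3 (f a) (f a') (f b)).
Proof.
move=> ex ey txy bA hb aA a'A.
have [ha|ha] := eqVneq (hZ h a) 0; last first.
  by rewrite (weight_off_edge ex ha) (weight_off_edge ey ha) mul0r mulr0 subrr mul0r mulr0.
have [ha'|ha'] := eqVneq (hZ h a') 0; last first.
  by rewrite (weight_off_edge ex ha') (weight_off_edge ey ha') mul0r mulr0 subrr mul0r mulr0.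
case: (ltgtP (tau a) (tau a')) => [lt|gt|eq].
- rewrite mulrCA; apply: mulr_ge0; last exact: orient.
  exact: (cross_weight_ge0 ex ey aA a'A ha ha' (ltW lt) txy).
- rewrite -opprB -[det3 (f a) _ _]opprK -det3_swap mulrNN mulrCA.
  apply: mulr_ge0; last exact: orient.
  exact: (cross_weight_ge0 ex ey a'A aA ha' ha (ltW gt) txy).
- by rewrite (edge_tau_inj ha ha' eq) det3_pp !mulr0.
Qed.

(* Two interior points with distinct tangent coordinates have distinct
   images: otherwise every term of the sum above vanishes, forcing the
   degenerate configuration excluded by edge_images_not_degenerate. *)
Lemma interior_pair_images (x y : R * R) :
  edge_interior x -> edge_interior y -> tauR x < tauR y -> F x != F y.
Proof.
move=> ix iy txy; apply/eqP => Fxy; have [[ex _ _] [ey _ _]] := (ix, iy).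
apply: edge_images_not_degenerate => b bA hb.
pose T a a' := sg * ((weight x a * weight y a' - weight x a' * weight y a) *
                     det3 (f a) (f a') (f b)).
have T_ge0 a a' : a \in A -> a' \in A -> 0 <= T a a'.
  exact: (cross_term_ge0 ex ey (ltW txy) bA hb).
have T_sum : \sum_(a <- A) \sum_(a' <- A) T a a' = 0.
  transitivity (sg * \sum_(a <- A) \sum_(a' <- A)
    (weight x a * weight y a' - weight x a' * weight y a) * det3 (f a) (f a') (f b)).
    by rewrite mulr_sumr; apply: eq_bigr => a _; rewrite mulr_sumr.
  by rewrite cross_sum_vanishes ?mulr0.
have T_eq0 a a' : a \in A -> a' \in A -> T a a' = 0.
  move=> aA; apply: sum_ge0_eq0 => [a2 a2A|]; first exact: T_ge0.
  apply: sum_ge0_eq0 T_sum a aA => a1 a1A.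
  by rewrite big_seq sumr_ge0 // => a2 a2A; apply: T_ge0.
have det_eq0 a a' : a \in A -> a' \in A -> hZ h a = 0 -> hZ h a' = 0 ->
    a != a' -> tau a <= tau a' -> det3 (f a) (f a') (f b) = 0.
  move=> aA a'A ha ha' naa' le_aa'.
  have lt_aa' : tau a < tau a'.
    by rewrite lt_def le_aa' andbT; apply: contra naa' => /eqP /esym /(edge_tau_inj ha ha') ->.
  move/eqP: (T_eq0 a a' aA a'A); rewrite /T mulf_eq0 (negPf sg_neq0) mulf_eq0.
  by rewrite (gt_eqF (cross_weight_gt0 ix iy aA a'A ha ha' lt_aa' txy)) => /eqP.
move=> a aA ha; split.
  have [<-|nv0a] := eqVneq v0 a; first by rewrite det3_pp.
  exact: det_eq0 (v0_min aA ha).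
have [->|nav1] := eqVneq a v1; first by rewrite det3_pp.
exact: det_eq0 (v1_max aA ha).
Qed.

Variable g1 : affform.
Hypotheses (g1H : g1 \in H) (g1v1 : hZ g1 v1 = 0)
  (g1_gt0 : forall a, a \in A -> hZ h a = 0 -> a != v1 -> 0 < hZ g1 a).

Lemma edge_patch_injective (x y : R * R) :
  in_edge A h x -> in_edge A h y -> F x = F y -> x = y.
Proof.
wlog le_xy : x y / tauR x <= tauR y.
  move=> W ex ey Fxy; have [/W|/ltW/W Wyx] := lerP (tauR x) (tauR y); first exact.
  by apply/esym/Wyx.
move=> ex ey Fxy; move: le_xy; rewrite le_eqVlt => /orP [/eqP txy|txy].
  by apply: (level_point_unique h_normsq_gt0 _ txy); case: ex => _ ->; case: ey => _ ->.
have F0 := patch_at_endpoint v0A hv0 g0H g0v0 g0_gt0.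
have F1 := patch_at_endpoint v1A hv1 g1H g1v1 g1_gt0.
have [[x0 x1] [y0 y1]] := (edge_range ex, edge_range ey).
exfalso; move: x0 y1; rewrite !le_eqVlt => /orP [/eqP x0|x0] /orP [/eqP y1|y1].
- move/eqP: fv01; apply.
  by rewrite -F0 -F1 -(edge_point_at ex hv0 (esym x0)) -(edge_point_at ey hv1 y1).
- have iy : edge_interior y by split => //; rewrite x0.
  by move/eqP: (patch_interior_ne_v0 iy); apply; rewrite -Fxy (edge_point_at ex hv0 (esym x0)).
- have ix : edge_interior x by split => //; rewrite -y1.
  by move/eqP: (patch_interior_ne_v1 ix); apply; rewrite Fxy (edge_point_at ey hv1 y1).
- have ix : edge_interior x by split => //; apply: lt_trans y1.
  have iy : edge_interior y by split => //; apply: lt_trans x0 _.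
  by move/eqP: (interior_pair_images ix iy txy).
Qed.

End EdgeRestriction.

Theorem corollary2 (R : rcfType) (A : seq lattice) (H : seq affform)
  (f : lattice -> R * R) :
  uniq A -> is_polygon A ->
  uniq H -> (forall h, h \in H <-> is_edge_ineq A h) ->
  compatible A f ->
  forall w : lattice -> R, (forall a, a \in A -> 0 < w a) ->
  forall h, h \in H ->
  forall x y : R * R, in_edge A h x -> in_edge A h y ->
    patch A H f w x = patch A H f w y -> x = y.
Proof.
move=> uA poly uH HH [wcomp vertex_inj] w w_gt0 h hH.
have hE := (HH h).1 hH; have [_ h_ge0 _] := hE.
have off := edge_off_point poly hE.
have [v0 [v1 [[v0A v1A hv0 hv1] v01 v0_min v1_max]]] := edge_endpoints hE.
have [g0 g0H [g0v0 g0_gt0]] := adjacent_edge HH hE (or_introl erefl) v0A hv0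
  (fun a aA ha => ler_wpM2l ler01 (v0_min a aA ha)) off.
have [g1 g1H [g1v1 g1_gt0]] := adjacent_edge HH hE (or_intror erefl) v1A hv1
  (fun a aA ha => ler_wnM2l (lerN10 _) (v1_max a aA ha)) off.
have g_ge0 g : g \in H -> forall a, a \in A -> 0 <= hZ g a by move=> /HH [].
have fv01 : f v0 != f v1.
  apply: vertex_inj v01.
  - exact: endpoint_vertex v0A hv0 g0v0 h_ge0 (g_ge0 g0 g0H) g0_gt0.
  - exact: endpoint_vertex v1A hv1 g1v1 h_ge0 (g_ge0 g1 g1H) g1_gt0.
have [sg sg_neq0 orient] := edge_orientation_sign wcomp hE.
have f_span : exists a0 a1 a2,
    [/\ a0 \in A, a1 \in A, a2 \in A & det3 (f a0) (f a1) (f a2) != 0].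
  by have [a0 [a1 [a2 [[? ? ?] _ ? _]]]] := wcomp; exists a0, a1, a2.
exact: (edge_patch_injective uA uH HH w_gt0 hH v0A v1A hv0 hv1 v0_min v1_max v01
  g0H g0v0 g0_gt0 sg_neq0 orient fv01 off f_span g1H g1v1 g1_gt0).
Qed.
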